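(* Let $X,Y$ be real normed linear spaces and $Z=X\oplus_pY$ with $1<p<\infty$. Let $(x,y)\in Z\setminus\{\theta\}$, where $x$ is $\varepsilon_x$-smooth in $X$ and $y$ is $\varepsilon_y$-smooth in $Y$ for some $\varepsilon_x,\varepsilon_y\in[0,2)$. Then $(x,y)$ is $\varepsilon$-smooth in $Z$ with $\varepsilon=\max\{\varepsilon_x,\varepsilon_y\}$.
   Context: $X\oplus_pY$ is $X\times Y$ with norm $(\|x\|^p+\|y\|^p)^{1/p}$. For a normed space $W$ and $w\neq\theta$, $J(w)=\{\phi\in S_{W^*}:\phi(w)=\|w\|\}$, and $w$ is $\delta$-smooth if $\sup_{\phi,\psi\in J(w)}\|\phi-\psi\|\le\delta$ (this is only defined for $w\neq\theta$, so the hypothesis includes $x\neq\theta$ and $y\neq\theta$). *)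

From HB Require Import structures.
From mathcomp Require Import all_boot all_order all_algebra.
From mathcomp Require Import all_classical all_reals all_analysis.
Set Implicit Arguments. Unset Strict Implicit. Unset Printing Implicit Defensive.
Import Order.TTheory GRing.Theory Num.Theory.
Import numFieldNormedType.Exports.
Local Open Scope classical_set_scope.
Local Open Scope ring_scope.

Section Dual.
Variables (R : realType) (V : lmodType R) (N : V -> R).

Definition lin_functional (f : V -> R) : Prop :=
  forall (a : R) (u v : V), f (a *: u + v) = a * f u + f v.

Definition bounded_functional (f : V -> R) : Prop :=
  exists M : R, forall v : V, `|f v| <= M * N v.

Definition dnorm (f : V -> R) : R :=
  sup [set `|f v| | v in [set v : V | N v <= 1]].

Definition inJ (w : V) (phi : V -> R) : Prop :=
  [/\ lin_functional phi, bounded_functional phi, dnorm phi = 1 & phi w = N w].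

Definition delta_smooth (w : V) (delta : R) : Prop :=
  w != 0 /\ forall phi psi : V -> R, inJ w phi -> inJ w psi ->
    dnorm (fun v => phi v - psi v) <= delta.
End Dual.

Definition psum_norm (R : realType) (X Y : normedModType R) (p : R)
  (z : X * Y) : R :=
  (`|z.1| `^ p + `|z.2| `^ p) `^ p^-1.

From HB Require Import structures.
From mathcomp Require Import all_boot all_order all_algebra.
From mathcomp Require Import all_classical all_reals all_analysis.
From mathcomp Require Import ring lra.
Import Order.TTheory GRing.Theory Num.Theory.
Import numFieldNormedType.Exports.
Local Open Scope ring_scope.
Set Implicit Arguments. Unset Strict Implicit.

(* A support functional phi of X (+)_p Y at (x, y) splits as
   phi (u, v) = phi (u, 0) + phi (0, v).  Since phi <= ||.|| with equality at
   (x, y), for ||w|| <= 1 the value phi (w, 0) is at most the right derivative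
   at t = 0 of t |-> ((||x|| + t)^p + ||y||^p)^(1/p) >= ||(x + t w, y)||.  This
   bounds the norm of phi (., 0) by a = (||x|| / ||(x, y)||)^(p-1), and that of
   phi (0, .) by b = (||y|| / ||(x, y)||)^(p-1).  As a ||x|| + b ||y|| equals
   ||(x, y)||, both bounds are attained at x and y, so phi (., 0) / a is in J(x)
   and phi (0, .) / b is in J(y).  For two support functionals phi and psi the
   restrictions of phi - psi thus have norms at most a eps_x and b eps_y, and
   since a^q + b^q = 1 for the conjugate exponent q, Hoelder's inequality gives
   ||phi - psi|| <= max(eps_x, eps_y). *)

Lemma powRK (R : realType) (p c : R) : p != 0 -> 0 <= c -> (c `^ p) `^ p^-1 = c.
Proof. by move=> p0 c0; rewrite -powRrM mulfV // powRr1. Qed.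

Lemma le_derive_of_secant (R : realType) (f : R -> R) (z D : R) :
  is_derive (0 : R) (1 : R) f D ->
  (forall t, 0 < t -> t * z <= f t - f 0) -> z <= D.
Proof.
move=> [fD <-] secant.
apply: (cvgr_to_ge (F := at_right (0 : R)) (cvg_dnbhs_at_right fD)).
near=> t; have t_gt0 : 0 < t by near: t; exact: nbhs_right_gt.
by rewrite /GRing.scale /= mulr1 addr0 ler_pdivlMl //; exact: secant.
Unshelve. all: end_near. Qed.

Section PsumWeight.
Variable R : realType.
Implicit Types p c d : R.

(* [psum_weight p |x| |y|] is (||x|| / ||(x, y)||_p)^(p-1). *)
Definition psum_weight p c d : R :=
  c `^ (p - 1) * (c `^ p + d `^ p) `^ (p^-1 - 1).

Lemma psum_weight_ge0 p c d : 0 <= psum_weight p c d.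
Proof. by rewrite mulr_ge0 ?powR_ge0. Qed.

Lemma psum_weight_gt0 p c d : 0 < c -> 0 < psum_weight p c d.
Proof.
move=> c0; rewrite mulr_gt0 ?powR_gt0 //.
by rewrite ltr_wpDr ?powR_ge0 ?powR_gt0.
Qed.

Lemma psum_weight_sum p c d : 0 < p -> 0 <= c -> 0 <= d -> 0 < c `^ p + d `^ p ->
  psum_weight p c d * c + psum_weight p d c * d = (c `^ p + d `^ p) `^ p^-1.
Proof.
move=> p0 c0 d0 S0; rewrite /psum_weight [d `^ p + _]addrC.
have -> : forall r, c `^ (p - 1) * r * c + d `^ (p - 1) * r * d =
    (c * c `^ (p - 1) + d * d `^ (p - 1)) * r by move=> r; ring.
by rewrite (mulr_powRB1 c0 p0) (mulr_powRB1 d0 p0) mulr_powRB1 ?invr_gt0 // ltW.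
Qed.

Lemma psum_weight_conj p c d : 1 < p -> 0 <= c -> 0 <= d -> 0 < c `^ p + d `^ p ->
  psum_weight p c d `^ (p / (p - 1)) + psum_weight p d c `^ (p / (p - 1)) = 1.
Proof.
move=> p1 c0 d0 S0.
have p0 : p != 0 by rewrite gt_eqF // (lt_trans ltr01).
have p1_neq0 : p - 1 != 0 by rewrite subr_eq0 gt_eqF.
have weightE e : 0 <= e ->
    (e `^ (p - 1) * (c `^ p + d `^ p) `^ (p^-1 - 1)) `^ (p / (p - 1)) =
    e `^ p / (c `^ p + d `^ p).
  move=> e0; rewrite powRM ?powR_ge0 // -!powRrM.
  have -> : (p - 1) * (p / (p - 1)) = p by field; rewrite p1_neq0.
  have -> : (p^-1 - 1) * (p / (p - 1)) = -1 by field; rewrite p1_neq0 p0.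
  by rewrite powRN powRr1 // ltW.
rewrite /psum_weight [d `^ p + _]addrC !weightE // -mulrDl mulfV //.
exact: lt0r_neq0.
Qed.

Lemma is_derive_psum_tangent p c d : 0 < p -> 0 < c ->
  is_derive (0 : R) (1 : R) (fun t : R => ((c + t) `^ p + d `^ p) `^ p^-1)
    (psum_weight p c d).
Proof.
move=> p0 c0.
have S0 : 0 < c `^ p + d `^ p by rewrite ltr_wpDr ?powR_ge0 ?powR_gt0.
have dS : is_derive (0 : R) (1 : R) (fun t : R => (c + t) `^ p + d `^ p)
    (p * c `^ (p - 1)).
  have dshift : is_derive (0 : R) 1 (fun t : R => c + t) 1.
    have := is_deriveD (is_derive_cst c (0 : R) 1) (is_derive_id (0 : R) 1).
    by rewrite add0r.
  have dpow : is_derive (0 : R) 1 ((@powR R)^~ p \o (fun t => c + t))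
      (p * c `^ (p - 1) * 1).
    by apply: is_derive1_comp dshift; rewrite /= addr0; exact: is_derive1_powR.
  have := is_deriveD dpow (is_derive_cst (d `^ p) (0 : R) (1 : R)).
  by rewrite mulr1 addr0.
have droot : is_derive ((fun t : R => (c + t) `^ p + d `^ p) 0) 1
    ((@powR R)^~ p^-1) (p^-1 * (c `^ p + d `^ p) `^ (p^-1 - 1)).
  by rewrite /= addr0; exact: is_derive1_powR.
have -> : psum_weight p c d =
    p^-1 * (c `^ p + d `^ p) `^ (p^-1 - 1) * (p * c `^ (p - 1)).
  by rewrite /psum_weight; field; exact: lt0r_neq0.
exact: (is_derive1_comp (g := fun t : R => (c + t) `^ p + d `^ p) (x := 0) droot dS).
Qed.

End PsumWeight.

Section LinearFunctional.
Variables (R : realType) (V : lmodType R).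
Implicit Types (f g : V -> R) (u v : V).

Lemma lin_functionalD f u v : lin_functional f -> f (u + v) = f u + f v.
Proof. by move=> lf; have := lf 1 u v; rewrite scale1r mul1r. Qed.

Lemma lin_functional0 f : lin_functional f -> f 0 = 0.
Proof. by move=> lf; apply: (addrI (f 0)); rewrite -lin_functionalD // !addr0. Qed.

Lemma lin_functionalZ f a u : lin_functional f -> f (a *: u) = a * f u.
Proof. by move=> lf; have := lf a u 0; rewrite addr0 lin_functional0 // addr0. Qed.

Lemma lin_functional_sub f g : lin_functional f -> lin_functional g ->
  lin_functional (fun v => f v - g v).
Proof. by move=> lf lg a u v; rewrite lf lg; ring. Qed.

Lemma lin_functional_scale f c : lin_functional f ->
  lin_functional (fun v => c * f v).
Proof. by move=> lf a u v; rewrite lf; ring. Qed.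

End LinearFunctional.

Section PairFunctional.
Variables (R : realType) (X Y : lmodType R) (phi : X * Y -> R).
Hypothesis lphi : lin_functional phi.

Lemma lin_functional_pair u v : phi (u, v) = phi (u, 0) + phi (0, v).
Proof. by rewrite -lin_functionalD // -[(u, 0) + _]/(u + 0, 0 + v) addr0 add0r. Qed.

Lemma lin_functional_inl : lin_functional (fun u : X => phi (u, 0)).
Proof.
by move=> a u v; rewrite -lphi -[_ + (v, 0)]/(a *: u + v, a *: 0 + 0) scaler0 addr0.
Qed.

Lemma lin_functional_inr : lin_functional (fun v : Y => phi (0, v)).
Proof.
by move=> a u v; rewrite -lphi -[_ + (0, v)]/(a *: 0 + 0, a *: u + v) scaler0 addr0.
Qed.

Lemma lin_functional_swap : lin_functional (fun z : Y * X => phi (z.2, z.1)).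
Proof. by move=> a u v; rewrite -lphi. Qed.

End PairFunctional.

Section DualNorm.
Variables (R : realType) (V : lmodType R) (N : V -> R).
Hypothesis N_ge0 : forall v, 0 <= N v.
Hypothesis NZ : forall a v, N (a *: v) = `|a| * N v.
Implicit Types (f g : V -> R) (u v w : V).

Lemma dnorm_le_ball f c : (forall v, N v <= 1 -> `|f v| <= c) -> dnorm N f <= c.
Proof.
move=> fc; apply: ge_sup => [|_ [v Nv <-]]; last exact: fc.
by exists `|f 0|, 0 => //=; have := NZ 0 0; rewrite scale0r normr0 mul0r => ->.
Qed.

Lemma ler_dnorm_ball f M v : (forall w, N w <= 1 -> `|f w| <= M) ->
  N v <= 1 -> `|f v| <= dnorm N f.
Proof.
move=> fM Nv; apply: ub_le_sup; last by exists v.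
by exists M => _ [w Nw <-]; exact: fM.
Qed.

Lemma ler_dnormM f v : lin_functional f -> bounded_functional N f ->
  `|f v| <= dnorm N f * N v.
Proof.
move=> lf [M fM].
have fball w : N w <= 1 -> `|f w| <= `|M|.
  move=> Nw; apply: le_trans (fM w) (le_trans (ler_wpM2r (N_ge0 w) (ler_norm M)) _).
  by rewrite -[leRHS]mulr1 ler_wpM2l.
have [Nv0|Nv_neq0] := eqVneq (N v) 0.
  by have := fM v; rewrite Nv0 !mulr0.
have Nv_gt0 : 0 < N v by rewrite lt0r Nv_neq0 N_ge0.
have := ler_dnorm_ball fball (v := (N v)^-1 *: v).
rewrite NZ ger0_norm ?invr_ge0 ?N_ge0 // mulVf // lexx => /(_ isT).
rewrite lin_functionalZ // normrM ger0_norm ?invr_ge0 ?N_ge0 //.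
by rewrite ler_pdivrMl // mulrC.
Qed.

Lemma inJ_le w phi v : inJ N w phi -> `|phi v| <= N v.
Proof.
by case=> lphi bphi dphi _; have := ler_dnormM v lphi bphi; rewrite dphi mul1r.
Qed.

Lemma lin_functional_le_ball f c : lin_functional f -> bounded_functional N f ->
  (forall w, N w <= 1 -> f w <= c) -> forall u, `|f u| <= c * N u.
Proof.
move=> lf bf fc u; apply: le_trans (ler_dnormM u lf bf) _.
apply: ler_wpM2r => //; apply: dnorm_le_ball => v Nv.
rewrite ler_norml fc // andbT lerNl -mulN1r -lin_functionalZ //.
by apply: fc; rewrite NZ normrN normr1 mul1r.
Qed.

Lemma inJ_rescale f a x : 0 < a -> 0 < N x -> lin_functional f ->
  (forall u, `|f u| <= a * N u) -> f x = a * N x ->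
  inJ N x (fun u => a^-1 * f u).
Proof.
move=> a0 Nx lf fa fx.
have fN u : `|a^-1 * f u| <= N u.
  by rewrite normrM gtr0_norm ?invr_gt0 // ler_pdivrMl.
split.
- exact: lin_functional_scale.
- by exists 1 => u; rewrite mul1r.
- apply/eqP; rewrite eq_le dnorm_le_ball => [|v]; last exact: le_trans.
  have := ler_dnorm_ball (fun v => le_trans (fN v)) (v := (N x)^-1 *: x).
  rewrite NZ ger0_norm ?invr_ge0 ?N_ge0 // mulVf ?gt_eqF // lexx => /(_ isT).
  rewrite (lin_functionalZ _ _ lf) fx.
  have -> : a^-1 * ((N x)^-1 * (a * N x)) = 1 by field; rewrite !gt_eqF.
  by rewrite normr1.
- by rewrite fx mulrA mulVf ?gt_eqF // mul1r.
Qed.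

Lemma delta_smooth_sub_le x e a f g : 0 < a -> delta_smooth N x e ->
  inJ N x (fun u => a^-1 * f u) -> inJ N x (fun u => a^-1 * g u) ->
  forall u, `|f u - g u| <= a * e * N u.
Proof.
move=> a0 [_ smooth] Jf Jg u.
have [lf _ _ _] := Jf; have [lg _ _ _] := Jg.
have bfg : bounded_functional N (fun v => a^-1 * f v - a^-1 * g v).
  exists 2 => v; apply: le_trans (ler_normB _ _) _.
  by have := inJ_le v Jf; have := inJ_le v Jg; lra.
have := ler_dnormM u (lin_functional_sub lf lg) bfg.
move/le_trans/(_ (ler_wpM2r (N_ge0 u) (smooth _ _ Jf Jg))).
by rewrite -mulrBr normrM gtr0_norm ?invr_gt0 // ler_pdivrMl // mulrA.
Qed.

End DualNorm.

Section PsumNorm.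
Variables (R : realType) (X Y : normedModType R) (p : R).
Hypothesis p_gt0 : 0 < p.

Lemma psum_norm_ge0 (z : X * Y) : 0 <= psum_norm p z.
Proof. exact: powR_ge0. Qed.

Lemma psum_normZ a (z : X * Y) : psum_norm p (a *: z) = `|a| * psum_norm p z.
Proof.
rewrite /psum_norm !normrZ !powRM // -mulrDr powRM ?addr_ge0 ?powR_ge0 //.
by rewrite powRK ?gt_eqF.
Qed.

Lemma psum_norm_inl (u : X) : psum_norm p (u, 0 : Y) = `|u|.
Proof. by rewrite /psum_norm /= normr0 powR0 ?gt_eqF // addr0 powRK ?gt_eqF. Qed.

Lemma psum_norm_swap (z : X * Y) : psum_norm p (z.2, z.1) = psum_norm p z.
Proof. by rewrite /psum_norm addrC. Qed.

Lemma psum_norm_le (u : X) (v : Y) c d : `|u| <= c -> `|v| <= d ->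
  psum_norm p (u, v) <= (c `^ p + d `^ p) `^ p^-1.
Proof.
have mono a b : 0 <= a -> a <= b -> a `^ p <= b `^ p.
  by move=> a0 ab; apply: ge0_ler_powR; rewrite ?nnegrE ?(ltW p_gt0) ?(le_trans a0).
move=> uc vd.
apply: ge0_ler_powR; rewrite ?nnegrE ?invr_ge0 ?(ltW p_gt0) ?addr_ge0 ?powR_ge0 //.
by rewrite lerD ?mono.
Qed.

End PsumNorm.

Lemma psum_norming_inl_le (R : realType) (X Y : normedModType R) (p : R)
    (x : X) (y : Y) (phi : X * Y -> R) :
  0 < p -> x != 0 -> lin_functional phi ->
  (forall z, `|phi z| <= psum_norm p z) -> phi (x, y) = psum_norm p (x, y) ->
  forall u, `|phi (u, 0)| <= psum_weight p `|x| `|y| * `|u|.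
Proof.
move=> p0 x0 lphi phi_le phixy.
apply: (lin_functional_le_ball (@normr_ge0 _ X) (@normrZ _ X)
  (lin_functional_inl lphi)).
  by exists 1 => u; rewrite mul1r -(psum_norm_inl Y p0 u); exact: phi_le.
move=> w w1.
have x_gt0 : 0 < `|x| by rewrite normr_gt0.
apply: (le_derive_of_secant (is_derive_psum_tangent `|y| p0 x_gt0)) => t t0.
have -> : t * phi (w, 0) = phi (t *: (w, 0) + (x, y)) - phi (x, y).
  by rewrite lphi; ring.
rewrite phixy addr0 lerD2r -[t *: _ + _]/(t *: w + x, t *: 0 + y) scaler0 add0r.
apply: le_trans (ler_norm _) (le_trans (phi_le _) (psum_norm_le p0 _ (lexx _))).
rewrite addrC (le_trans (ler_normD _ _)) // lerD2l normrZ gtr0_norm //.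
by rewrite -[leRHS]mulr1 ler_wpM2l // ltW.
Qed.

Lemma psum_norming_inr_le (R : realType) (X Y : normedModType R) (p : R)
    (x : X) (y : Y) (phi : X * Y -> R) :
  0 < p -> y != 0 -> lin_functional phi ->
  (forall z, `|phi z| <= psum_norm p z) -> phi (x, y) = psum_norm p (x, y) ->
  forall v, `|phi (0, v)| <= psum_weight p `|y| `|x| * `|v|.
Proof.
move=> p0 y0 lphi phi_le phixy.
apply: (psum_norming_inl_le (phi := fun z : Y * X => phi (z.2, z.1)) p0 y0).
- exact: lin_functional_swap.
- by move=> z; rewrite -psum_norm_swap; exact: phi_le.
- by rewrite /= phixy -psum_norm_swap.
Qed.

Lemma inJ_psum_components (R : realType) (X Y : normedModType R) (p : R)
    (x : X) (y : Y) (phi : X * Y -> R) :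
  0 < p -> x != 0 -> y != 0 -> inJ (psum_norm p) (x, y) phi ->
  inJ (fun u : X => `|u|) x (fun u => (psum_weight p `|x| `|y|)^-1 * phi (u, 0)) /\
  inJ (fun v : Y => `|v|) y (fun v => (psum_weight p `|y| `|x|)^-1 * phi (0, v)).
Proof.
move=> p0 x0 y0 Jphi; have [lphi _ _ phixy] := Jphi.
have x_gt0 : 0 < `|x| by rewrite normr_gt0.
have y_gt0 : 0 < `|y| by rewrite normr_gt0.
have phi_le z : `|phi z| <= psum_norm p z.
  exact: (inJ_le (@psum_norm_ge0 _ _ _ p) (psum_normZ p0) z Jphi).
have phi_x := psum_norming_inl_le p0 x0 lphi phi_le phixy.
have phi_y := psum_norming_inr_le p0 y0 lphi phi_le phixy.
have S_gt0 : 0 < `|x| `^ p + `|y| `^ p by rewrite ltr_wpDr ?powR_ge0 ?powR_gt0.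
have phi_sum : phi (x, 0) + phi (0, y) =
    psum_weight p `|x| `|y| * `|x| + psum_weight p `|y| `|x| * `|y|.
  by rewrite -lin_functional_pair // phixy psum_weight_sum ?normr_ge0.
have phi_x_le := le_trans (ler_norm _) (phi_x x).
have phi_y_le := le_trans (ler_norm _) (phi_y y).
have phi_xE : phi (x, 0) = psum_weight p `|x| `|y| * `|x|.
  apply/eqP; rewrite eq_le phi_x_le -(lerD2r (phi (0, y))) phi_sum.
  by rewrite lerD2l.
have phi_yE : phi (0, y) = psum_weight p `|y| `|x| * `|y|.
  by move: phi_sum; rewrite phi_xE => /addrI.
split.
- apply: (inJ_rescale (@normr_ge0 _ X) (@normrZ _ X)) => //.
  + exact: psum_weight_gt0.
  + exact: lin_functional_inl.
- apply: (inJ_rescale (@normr_ge0 _ Y) (@normrZ _ Y)) => //.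
  + exact: psum_weight_gt0.
  + exact: lin_functional_inr.
Qed.

Lemma dnorm_psum_le_max (R : realType) (X Y : normedModType R) (p : R)
    (f : X * Y -> R) (a b ex ey : R) :
  1 < p -> 0 <= a -> 0 <= b -> 0 <= ex -> 0 <= ey ->
  a `^ (p / (p - 1)) + b `^ (p / (p - 1)) = 1 -> lin_functional f ->
  (forall u, `|f (u, 0)| <= a * ex * `|u|) ->
  (forall v, `|f (0, v)| <= b * ey * `|v|) ->
  dnorm (psum_norm p) f <= Num.max ex ey.
Proof.
move=> p1 a0 b0 ex0 ey0 ab1 lf fu fv.
have p0 : 0 < p by rewrite (lt_trans ltr01).
set q := p / (p - 1) in ab1.
have q0 : 0 < q by rewrite divr_gt0 // subr_gt0.
have pq : p^-1 + q^-1 = 1.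
  by rewrite /q; field; rewrite subr_eq0 !gt_eqF.
set e := Num.max ex ey.
have ex_e : ex <= e by rewrite le_max lexx.
have ey_e : ey <= e by rewrite le_max lexx orbT.
apply: (dnorm_le_ball (psum_normZ p0)) => -[u v] uv1.
have hoelder := hoelder2 (normr_ge0 u) (normr_ge0 v) a0 b0 p0 q0 pq.
rewrite ab1 powR1 mulr1 in hoelder.
rewrite lin_functional_pair //; apply: le_trans (ler_normD _ _) _.
apply: le_trans (lerD (fu u) (fv v)) _.
rewrite [a * _]mulrC [b * _]mulrC -!mulrA.
apply: le_trans (lerD (ler_wpM2r (mulr_ge0 a0 (normr_ge0 u)) ex_e)
                      (ler_wpM2r (mulr_ge0 b0 (normr_ge0 v)) ey_e)) _.
rewrite -mulrDr -[leRHS]mulr1 ler_wpM2l ?(le_trans ex0) //.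
by rewrite ![_ * `|_|]mulrC (le_trans hoelder uv1).
Qed.

Theorem theorem6p2 (R : realType) (X Y : normedModType R) (p : R)
  (x : X) (y : Y) (ex ey : R) :
  1 < p ->
  0 <= ex -> ex < 2 -> 0 <= ey -> ey < 2 ->
  delta_smooth (fun v : X => `|v|) x ex ->
  delta_smooth (fun v : Y => `|v|) y ey ->
  delta_smooth (psum_norm p) (x, y) (Num.max ex ey).
Proof.
move=> p1 ex0 _ ey0 _ smooth_x smooth_y.
have [x0 _] := smooth_x; have [y0 _] := smooth_y.
have p0 : 0 < p by rewrite (lt_trans ltr01).
split; first by apply: contra_neq x0 => /(congr1 fst).
move=> phi psi Jphi Jpsi.
have [[lphi _ _ _] [lpsi _ _ _]] := (Jphi, Jpsi).
have [Jphi_x Jphi_y] := inJ_psum_components p0 x0 y0 Jphi.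
have [Jpsi_x Jpsi_y] := inJ_psum_components p0 x0 y0 Jpsi.
have S_gt0 : 0 < `|x| `^ p + `|y| `^ p.
  by rewrite ltr_wpDr ?powR_ge0 ?powR_gt0 ?normr_gt0.
apply: (dnorm_psum_le_max p1 (psum_weight_ge0 p `|x| `|y|)
  (psum_weight_ge0 p `|y| `|x|) ex0 ey0).
- by rewrite psum_weight_conj ?normr_ge0.
- exact: lin_functional_sub.
- apply: (delta_smooth_sub_le (@normr_ge0 _ X) (@normrZ _ X) _ smooth_x Jphi_x Jpsi_x).
  by rewrite psum_weight_gt0 ?normr_gt0.
- apply: (delta_smooth_sub_le (@normr_ge0 _ Y) (@normrZ _ Y) _ smooth_y Jphi_y Jpsi_y).
  by rewrite psum_weight_gt0 ?normr_gt0.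
Qed.
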